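(* Let $p$ be a prime number and $G$ a transitive group of degree $p$. Then $\#G^{\mathrm{ab}}$ is a multiple of $p$ if and only if $G\cong C_{p}$.
   Context: A transitive group of degree $p$ is a subgroup of $\mathfrak{S}_p$ acting transitively on $p$ points. $G^{\mathrm{ab}}:=G/[G,G]$ is the abelianization. *)

From mathcomp Require Import all_boot all_fingroup all_solvable zmodp.
Set Implicit Arguments. Unset Strict Implicit. Unset Printing Implicit Defensive.

From mathcomp Require Import all_boot all_fingroup all_solvable zmodp.

Set Implicit Arguments.
Unset Strict Implicit.
Unset Printing Implicit Defensive.

(* If p divides #|G / G'| then p does not divide #|G'|, since p ^ 2 does not
   divide p`! and hence not #|G|. The orbits of the normal subgroup G' are
   permuted transitively by G, so they all have one size, dividing both p and
   #|G'|; hence G' fixes every point and is trivial. Finally, an abelian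
   transitive group acts regularly, so #|G| = p. *)

Lemma prime_ndvd_fact p m : prime p -> m < p -> ~~ (p %| m`!).
Proof.
move=> p_pr; elim: m => [|m IHm] ltmp.
  by rewrite fact0 dvdn1 neq_ltn prime_gt1 ?orbT.
by rewrite factS Euclid_dvdM // negb_or gtnNdvd ?IHm // ltnW.
Qed.

Lemma prime_sq_ndvd_fact p : prime p -> ~~ (p ^ 2 %| p`!).
Proof.
move=> p_pr; have p_gt0 := prime_gt0 p_pr.
rewrite -(prednK p_gt0) factS prednK // expnS expn1 dvdn_pmul2l //.
by rewrite prime_ndvd_fact // prednK.
Qed.

Lemma card_perm_group_dvd_fact (T : finType) (G : {group {perm T}}) :
  #|G| %| #|T|`!.
Proof. by rewrite -card_Sym cardSg ?subsetT. Qed.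

Section TransitiveAction.

Local Open Scope group_scope.

Variables (aT : finGroupType) (rT : finType) (to : {action aT &-> rT}).
Variable G : {group aT}.
Hypothesis trG : [transitive G, on [set: rT] | to].

Lemma card_orbit_normal_transitive (H : {group aT}) x y :
  G \subset 'N(H) -> #|orbit to H x| = #|orbit to H y|.
Proof.
move=> nHG; have [g Gg ->] := atransP2 trG (in_setT x) (in_setT y).
by rewrite -{2}(normsP nHG g Gg) -setact_orbit card_setact.
Qed.

Lemma card_orbit_normal_transitive_dvd (H : {group aT}) x :
  G \subset 'N(H) -> #|orbit to H x| %| #|rT|.
Proof.
move=> nHG; have actsH : [acts H, on [set: rT] | to].
  by apply/subsetP => a _; rewrite !inE; apply/subsetP => z; rewrite !inE.
have:= card_uniform_partition (n := #|orbit to H x|) _ (orbit_partition actsH).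
rewrite cardsT => -> //; first exact: dvdn_mull.
by move=> _ /imsetP[y _ ->]; apply: card_orbit_normal_transitive.
Qed.

Lemma transitive_prime_normal_trivial (H : {group aT}) :
  prime #|rT| -> [faithful H, on [set: rT] | to] ->
  G \subset 'N(H) -> ~~ (#|rT| %| #|H|) -> H :=: 1.
Proof.
move=> rT_pr ffulH nHG rT'H; apply/trivgP/subsetP => a Ha; rewrite inE.
apply/eqP/(faithfulP ffulH) => // x _.
have orbit1 : #|orbit to H x| = 1%N.
  have /primeP[_ /(_ _ (card_orbit_normal_transitive_dvd x nHG))] := rT_pr.
  case/orP => /eqP // orbit_rT.
  by move: (dvdn_orbit to H x); rewrite orbit_rT (negbTE rT'H).
by apply/set1P; rewrite -(card_orbit1 orbit1) mem_orbit.
Qed.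

Lemma abelian_transitive_card :
  abelian G -> [faithful G, on [set: rT] | to] -> #|G| = #|rT|.
Proof.
move=> cGG ffulG; have [x _] := imsetP trG.
have stab1 : 'C_G[x | to] = 1.
  apply/trivgP/subsetP => a /setIP[Ga /astab1P xa]; rewrite inE.
  apply/eqP/(faithfulP ffulG) => // _ /(atransP2 trG (in_setT x))[g Gg ->].
  by rewrite -actM (centsP cGG g Gg a Ga) actM xa.
by rewrite -(card_orbit_stab to G x) stab1 cards1 muln1 (atransP trG x) ?cardsT ?inE.
Qed.

End TransitiveAction.

Theorem lemma2p3 (p : nat) (G : {group {perm 'I_p}}) :
  prime p ->
  [transitive G, on [set: 'I_p] | 'P] ->
  ((p %| #|(G / [~: G, G])%g|)%N <-> G \isog Zp p).
Proof.
move=> p_pr trG; have cardT : #|'I_p| = p := card_ord p.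
have nG'G : (G \subset 'N([~: G, G]))%g := normal_norm (der_normal 1 G).
split=> [p_dvd_ab | isoG]; last first.
  have cGG : abelian G.
    by rewrite (isog_abelian isoG) cyclic_abelian // prime_cyclic // card_Zp ?prime_gt0.
  rewrite (commG1P cGG) -(card_isog (quotient1_isog G)) (card_isog isoG).
  by rewrite card_Zp ?prime_gt0.
have p'G' : ~~ (p %| #|[~: G, G]%g|).
  move: (prime_sq_ndvd_fact p_pr); apply: contra => p_dvd_G'.
  rewrite -cardT (dvdn_trans _ (card_perm_group_dvd_fact G)) // cardT.
  by rewrite -(Lagrange (der1_subG G)) -card_quotient // expnS expn1 dvdn_mul.
have cGG : abelian G.
  apply/commG1P/(transitive_prime_normal_trivial trG);
  by rewrite ?cardT ?perm_faithful.
have cardG : #|G| = p.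
  by rewrite (abelian_transitive_card trG cGG (perm_faithful G)) cardT.
by rewrite isog_cyclic_card ?prime_cyclic ?card_Zp ?cardG ?prime_gt0 /=.
Qed.
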